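(* Let $R$ be a commutative domain, $B=R(t,\sigma,H,J)$, $M$ an $R$-weight $B$-module, $\mathfrak m\in\operatorname{Maxspec}(R)$ and $0\neq w\in M_{\mathfrak m}$. If $B_1w=0$ then $\sigma(\mathfrak m)\in\mathcal S(B)$. If $B_{-1}w=0$ then $\mathfrak m\in\mathcal S(B)$.
   Context: $\Bbbk$ is a field; all algebras are associative unital $\Bbbk$-algebras. For an algebra $R$ and $\sigma\in\operatorname{Aut}_\Bbbk(R)$, $R[t,t^{-1};\sigma]$ is the skew Laurent ring: generated over $R$ by $t,t^{-1}$ with $tt^{-1}=t^{-1}t=1$ and $t^{\pm1}r=\sigma^{\pm1}(r)t^{\pm1}$ for $r\in R$. Given two-sided ideals $H,J$ of $R$, set $I^{(0)}=R$, $I^{(n)}=J\sigma(J)\cdots\sigma^{n-1}(J)$ for $n\ge1$, and $I^{(n)}=\sigma^{-1}(H)\sigma^{-2}(H)\cdots\sigma^{n}(H)$ for $n\le-1$; it is assumed throughout that $I^{(n)}\neq0$ for all $n\in\mathbb Z$. The Bell–Rogalski (BR) algebra is $R(t,\sigma,H,J)=\bigoplus_{n\in\mathbb Z}I^{(n)}t^n\subseteq R[t,t^{-1};\sigma]$; write $B_n=I^{(n)}t^n$. For $R$ commutative, $\mathcal S(B)=\{\mathfrak p\in\operatorname{Spec}(R):\mathfrak p\supseteq HJ\}$. For $R$ a commutative domain, a left $B$-module $M$ is an $R$-weight module if $M=\bigoplus_{\mathfrak m\in\operatorname{Maxspec}(R)}M_{\mathfrak m}$ where $M_{\mathfrak m}=\{v\in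 M:\mathfrak m v=0\}$ and $\dim_{R/\mathfrak m}M_{\mathfrak m}<\infty$ for all $\mathfrak m$. *)

From HB Require Import structures.
From mathcomp Require Import all_boot all_order all_algebra.
Set Implicit Arguments. Unset Strict Implicit. Unset Printing Implicit Defensive.
Import GRing.Theory.
Local Open Scope ring_scope.

Section Defs.
Variable R : comNzRingType.

Definition is_ideal (I : R -> Prop) : Prop :=
  [/\ I 0, (forall x y, I x -> I y -> I (x + y)) & (forall r x, I x -> I (r * x))].

Definition sub_ideal (I K : R -> Prop) : Prop := forall x, I x -> K x.

Definition is_prime_ideal (P : R -> Prop) : Prop :=
  [/\ is_ideal P, ~ P 1 & forall a b, P (a * b) -> P a \/ P b].

Definition is_maximal_ideal (m : R -> Prop) : Prop :=
  [/\ is_ideal m, ~ m 1 &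
     forall I, is_ideal I -> sub_ideal m I -> (forall x, I x <-> m x) \/ I 1].

Definition idealMul (I K : R -> Prop) : R -> Prop :=
  fun x => exists n (a b : 'I_n -> R),
    (forall i, I (a i)) /\ (forall i, K (b i)) /\ x = \sum_(i < n) a i * b i.

Definition img (f : R -> R) (I : R -> Prop) : R -> Prop :=
  fun x => exists y, I y /\ x = f y.

Definition fullR : R -> Prop := fun _ => True.

Definition spow (s sinv : R -> R) (n : int) : R -> R :=
  match n with
  | Posz k => fun x => iter k s x
  | Negz k => fun x => iter k.+1 sinv x
  end.

(* Jprod k = J sigma(J) ... sigma^k(J)   (= I^(k+1)) *)
Fixpoint Jprod (s sinv : R -> R) (J : R -> Prop) (k : nat) : R -> Prop :=
  match k with
  | 0 => img (spow s sinv 0) J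
  | k'.+1 => idealMul (Jprod s sinv J k') (img (spow s sinv (Posz k)) J)
  end.

(* Hprod k = sigma^-1(H) sigma^-2(H) ... sigma^-(k+1)(H)   (= I^(-(k+1))) *)
Fixpoint Hprod (s sinv : R -> R) (H : R -> Prop) (k : nat) : R -> Prop :=
  match k with
  | 0 => img (spow s sinv (Negz 0)) H
  | k'.+1 => idealMul (Hprod s sinv H k') (img (spow s sinv (Negz k)) H)
  end.

Definition Iseq (s sinv : R -> R) (H J : R -> Prop) (n : int) : R -> Prop :=
  match n with
  | Posz 0 => fullR
  | Posz k'.+1 => Jprod s sinv J k'
  | Negz k => Hprod s sinv H k
  end.

Definition in_SB (H J : R -> Prop) (P : R -> Prop) : Prop :=
  is_prime_ideal P /\ sub_ideal (idealMul H J) P.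

(* A left module over B = R(t,sigma,H,J), described by the action of the
   homogeneous elements r t^n (r in I^(n)): act n r v = (r t^n) . v.
   Since B = (+)_n I^(n) t^n, this data is exactly a B-module structure. *)
Definition BR_module (M : zmodType) (s sinv : R -> R) (H J : R -> Prop)
  (act : int -> R -> M -> M) : Prop :=
  [/\ (forall n r r' v, Iseq s sinv H J n r -> Iseq s sinv H J n r' ->
         act n (r + r') v = act n r v + act n r' v),
      (forall n r v v', Iseq s sinv H J n r ->
         act n r (v + v') = act n r v + act n r v'),
      (forall n m r r' v, Iseq s sinv H J n r -> Iseq s sinv H J m r' ->
         act n r (act m r' v) = act (n + m) (r * spow s sinv n r') v)
    & (forall v, act 0 1 v = v)].

Definition weight_space (M : zmodType) (act : int -> R -> M -> M)
  (m : R -> Prop) (v : M) : Prop := forall r, m r -> act 0 r v = 0.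

(* R-weight module: M = (+)_{m maximal} M_m, each M_m finite dimensional
   over R/m (equivalently, finitely generated as an R-module). *)
Definition weight_module (M : zmodType) (act : int -> R -> M -> M) : Prop :=
  [/\ (forall v : M, exists n (ms : 'I_n -> (R -> Prop)) (vs : 'I_n -> M),
         injective ms /\
         (forall i, is_maximal_ideal (ms i) /\ weight_space act (ms i) (vs i)) /\
         v = \sum_(i < n) vs i),
      (forall n (ms : 'I_n -> (R -> Prop)) (vs : 'I_n -> M),
         injective ms ->
         (forall i, is_maximal_ideal (ms i) /\ weight_space act (ms i) (vs i)) ->
         \sum_(i < n) vs i = 0 -> forall i, vs i = 0)
    & (forall m, is_maximal_ideal m ->
         exists n (gs : 'I_n -> M),
           (forall i, weight_space act m (gs i)) /\
           forall v, weight_space act m v ->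
             exists cs : 'I_n -> R, v = \sum_(i < n) act 0 (cs i) (gs i))].

End Defs.

Definition is_k_aut (k : fieldType) (R : comAlgType k) (s sinv : R -> R) : Prop :=
  (forall x y, s (x + y) = s x + s y) /\
  (forall x y, s (x * y) = s x * s y) /\
  s 1 = 1 /\
  (forall (c : k) x, s (c *: x) = c *: s x) /\
  cancel s sinv /\ cancel sinv s.

From HB Require Import structures.
From mathcomp Require Import ring.
From mathcomp Require Import all_boot all_order all_algebra.
Set Implicit Arguments. Unset Strict Implicit. Unset Printing Implicit Defensive.
Import GRing.Theory.
Local Open Scope ring_scope.

(* For h in H and j in J, the products (sigma^-1(h) t^-1)(j t) = sigma^-1(hj)
   and (j t)(sigma^-1(h) t^-1) = jh lie in B_0 = R and act on w through B_1 w,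
   resp. B_-1 w.  So if B_1 w = 0 (resp. B_-1 w = 0), then sigma^-1(HJ)
   (resp. HJ) annihilates w.  The annihilator of w in R is a proper ideal
   containing the maximal ideal m, hence equals m. *)

Section Ideals.
Variable R : comNzRingType.
Implicit Types (I K P m : R -> Prop).

Lemma ideal_sum P n (f : 'I_n -> R) :
  is_ideal P -> (forall i, P (f i)) -> P (\sum_(i < n) f i).
Proof. by case=> P0 PD _ Pf; apply: big_ind => // i _; apply: Pf. Qed.

Lemma idealMul_sub I K P :
  is_ideal P -> (forall a b, I a -> K b -> P (a * b)) ->
  sub_ideal (idealMul I K) P.
Proof.
move=> idP PIK _ [n [a [b [Ia [Kb ->]]]]].
by apply: ideal_sum => // i; apply: PIK.
Qed.

Lemma maximal_ideal_sup m I :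
  is_maximal_ideal m -> is_ideal I -> sub_ideal m I -> ~ I 1 -> sub_ideal I m.
Proof.
case=> _ _ mmax idI mI nI1.
by case: (mmax I idI mI) => [eqI x /eqI | /nI1].
Qed.

Lemma maximal_ideal_prime m : is_maximal_ideal m -> is_prime_ideal m.
Proof.
case=> [[m0 mD mM] m1 mmax]; split=> [|//|a b mab]; first by split.
pose I x := exists r y, m y /\ x = r * a + y.
have idI : is_ideal I.
  split.
  - by exists 0, 0; rewrite mul0r add0r.
  - move=> _ _ [r1 [y1 [my1 ->]]] [r2 [y2 [my2 ->]]].
    by exists (r1 + r2), (y1 + y2); split; [apply: mD | ring].
  - move=> r _ [r1 [y1 [my1 ->]]].
    by exists (r * r1), (r * y1); split; [apply: mM | ring].
have mI : sub_ideal m I by move=> x mx; exists 0, x; rewrite mul0r add0r.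
case: (mmax I idI mI) => [eqI | [r [y [my e]]]].
  by left; apply/eqI; exists 1, 0; rewrite mul1r addr0.
have -> : b = r * (a * b) + b * y by rewrite -[LHS]mulr1 e; ring.
by right; apply: mD; apply: mM.
Qed.

End Ideals.

Section AutomorphismImage.
Variables (R : comNzRingType) (s sinv : R -> R).
Hypotheses (sD : {morph s : x y / x + y}) (sM : {morph s : x y / x * y}).
Hypotheses (s1 : s 1 = 1) (sK : cancel s sinv) (sinvK : cancel sinv s).

Lemma img_ideal I : is_ideal I -> is_ideal (img s I).
Proof.
case=> I0 ID IM; split.
- exists 0; split=> //; apply: (addrI (s 0)); by rewrite -sD !addr0.
- move=> _ _ [x [Ix ->]] [y [Iy ->]].
  by exists (x + y); rewrite sD; split=> //; apply: ID.
- move=> r _ [x [Ix ->]].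
  by exists (sinv r * x); rewrite sM sinvK; split=> //; apply: IM.
Qed.

Lemma img_prime_ideal P : is_prime_ideal P -> is_prime_ideal (img s P).
Proof.
case=> idP nP1 Pp; split; first exact: img_ideal.
  by case=> y [Py /esym]; rewrite -s1 => /(can_inj sK) y1; apply: nP1; rewrite -y1.
move=> a b [y [Py]]; rewrite -{1}(sinvK a) -{1}(sinvK b) -sM => /(can_inj sK) ey.
rewrite -ey in Py; case: (Pp _ _ Py) => [Pa | Pb].
  by left; exists (sinv a).
by right; exists (sinv b).
Qed.

End AutomorphismImage.

Lemma spowN1 (R : comNzRingType) (s sinv : R -> R) x : spow s sinv (-1) x = sinv x.
Proof. by rewrite -(NegzE 0). Qed.

Section BRModule.
Variables (R : comNzRingType) (s sinv : R -> R) (H J : R -> Prop).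
Variables (M : zmodType) (act : int -> R -> M -> M).
Hypothesis HM : BR_module s sinv H J act.
Variable w : M.

Definition ann : R -> Prop := fun a => act 0 a w = 0.

Definition B_kills (n : int) : Prop :=
  forall r, Iseq s sinv H J n r -> act n r w = 0.

Lemma act_r0 n r : Iseq s sinv H J n r -> act n r 0 = 0.
Proof.
case: HM => _ aV _ _ Ir; apply: (addrI (act n r 0)).
by rewrite -aV // !addr0.
Qed.

Lemma ann_ideal : is_ideal ann.
Proof.
case: HM => aD _ aC _; split.
- by apply: (addrI (act 0 0 w)); rewrite -aD // !addr0.
- by move=> x y; rewrite /ann aD // => -> ->; rewrite addr0.
- move=> r x ax; have := aC 0 0 r x w I I.
  by rewrite ax act_r0 // => /esym.
Qed.

Lemma ann_sub_maximal m :
  is_maximal_ideal m -> weight_space act m w -> w <> 0 -> sub_ideal ann m.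
Proof.
move=> mmax mw w0; apply: maximal_ideal_sup ann_ideal mw _ => // ann1.
by case: HM => _ _ _ a1; apply: w0; rewrite -(a1 w).
Qed.

Lemma B_kills1_ann h j : B_kills 1 -> H h -> J j -> ann (sinv h * sinv j).
Proof.
case: HM => _ _ aC _ B1 Hh Jj.
have Ih : Iseq s sinv H J (-1) (sinv h) by exists h.
have Ij : Iseq s sinv H J 1 j by exists j.
have := aC (-1) 1 _ _ w Ih Ij.
by rewrite B1 // act_r0 // addNr spowN1 => /esym.
Qed.

Lemma B_killsN1_ann h j : B_kills (-1) -> H h -> J j -> ann (j * s (sinv h)).
Proof.
case: HM => _ _ aC _ Bm1 Hh Jj.
have Ih : Iseq s sinv H J (-1) (sinv h) by exists h.
have Ij : Iseq s sinv H J 1 j by exists j.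
have := aC 1 (-1) _ _ w Ij Ih.
by rewrite Bm1 // act_r0 // addrN => /esym.
Qed.

End BRModule.

Theorem corollary3p2 (k : fieldType) (R : comAlgType k)
  (Rdom : forall a b : R, a * b = 0 -> a = 0 \/ b = 0)
  (s sinv : R -> R) (Hs : is_k_aut s sinv)
  (H J : R -> Prop) (HH : is_ideal H) (HJ : is_ideal J)
  (Inz : forall n : int, exists x, Iseq s sinv H J n x /\ x <> 0)
  (M : zmodType) (act : int -> R -> M -> M)
  (HM : BR_module s sinv H J act) (Hw : weight_module act)
  (m : R -> Prop) (Hm : is_maximal_ideal m)
  (w : M) (Hwm : weight_space act m w) (Hw0 : w <> 0) :
  ((forall r, Iseq s sinv H J 1 r -> act 1 r w = 0) -> in_SB H J (img s m)) /\
  ((forall r, Iseq s sinv H J (-1) r -> act (-1) r w = 0) -> in_SB H J m).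
Proof.
case: Hs => sD [sM [s1 [_ [sK sinvK]]]].
have annm := ann_sub_maximal HM Hm Hwm Hw0.
have mprime := maximal_ideal_prime Hm.
have smprime := img_prime_ideal sD sM s1 sK sinvK mprime.
split=> [B1 | Bm1]; split=> //.
- case: smprime => idsm _ _; apply: idealMul_sub => // h j Hh Jj.
  exists (sinv h * sinv j); rewrite sM !sinvK; split=> //.
  exact/annm/(B_kills1_ann HM).
- case: mprime => idm _ _; apply: idealMul_sub => // h j Hh Jj.
  by rewrite mulrC -[h]sinvK; apply/annm/(B_killsN1_ann HM).
Qed.
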